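(* Let $\{A,B\}\cup\{C_\alpha:\alpha<\omega_1\}$ be a partition of $\omega_1$ with $|A|=|B|=\omega_1$ and $|C_\alpha|=\omega$ for all $\alpha<\omega_1$. Let $\mathbb X=\langle\omega_1,\rho\rangle$ and $\mathbb Y=\langle\omega_1,\sigma\rangle$ where $\rho$ is the equivalence relation whose classes are $A\cup B$ and the $C_\alpha$ ($\alpha<\omega_1$), and $\sigma$ the one whose classes are $A$, $B$ and the $C_\alpha$ ($\alpha<\omega_1$). Then $\mathbb X\sim_c\mathbb Y$, $\mathbb X\equiv_{\infty\omega}\mathbb Y$, and $\mathbb X\not\cong\mathbb Y$.
   Context: A condensation from $\langle X,\rho\rangle$ onto $\langle Y,\sigma\rangle$ is a bijection $F:X\to Y$ with $x\,\rho\,x'\Rightarrow F(x)\,\sigma\,F(x')$; $\mathbb X\sim_c\mathbb Y$ means condensations exist in both directions. $\mathbb X\equiv_{\infty\omega}\mathbb Y$ means $\mathbb X$ and $\mathbb Y$ satisfy the same sentences of the infinitary logic $L_{\infty\omega}$ (language with one binary relation symbol). *)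

From Stdlib Require Import PeanoNat.

Definition equinumerous (X Y : Type) : Prop :=
  exists (f : X -> Y) (g : Y -> X),
    (forall x, g (f x) = x) /\ (forall y, f (g y) = y).

Definition countable (X : Type) : Prop :=
  exists f : X -> nat, forall x y, f x = f y -> x = y.

(** [W] with the strict relation [lt] is (order-isomorphic to) the ordinal
    omega_1: a well-founded strict total order which is uncountable but all of
    whose proper initial segments are countable.  This characterises omega_1
    up to order isomorphism. *)
Record is_omega1 (W : Set) (lt : W -> W -> Prop) : Prop := {
  o1_irrefl : forall x, ~ lt x x;
  o1_trans : forall x y z, lt x y -> lt y z -> lt x z;
  o1_total : forall x y, lt x y \/ x = y \/ lt y x;
  o1_wf : well_founded lt;
  o1_uncountable : ~ countable W;
  o1_segments : forall x, countable {y : W | lt y x}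
}.

Definition condensation {X Y : Type} (rho : X -> X -> Prop)
  (sigma : Y -> Y -> Prop) (F : X -> Y) : Prop :=
  (exists G : Y -> X, (forall x, G (F x) = x) /\ (forall y, F (G y) = y)) /\
  (forall x x', rho x x' -> sigma (F x) (F x')).

Definition condenses {X Y : Type} (rho : X -> X -> Prop)
  (sigma : Y -> Y -> Prop) : Prop :=
  exists F : X -> Y, condensation rho sigma F.

Definition bi_condensable {X Y : Type} (rho : X -> X -> Prop)
  (sigma : Y -> Y -> Prop) : Prop :=
  condenses rho sigma /\ condenses sigma rho.

Definition isomorphic {X Y : Type} (rho : X -> X -> Prop)
  (sigma : Y -> Y -> Prop) : Prop :=
  exists (F : X -> Y) (G : Y -> X),
    (forall x, G (F x) = x) /\ (forall y, F (G y) = y) /\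
    (forall x x', rho x x' <-> sigma (F x) (F x')).

(** Variables are natural numbers; conjunctions range over arbitrary
    index types (sets); quantification is finitary (one variable at a time).
    Formulas with no free variables (sentences) automatically have only
    finitely many free variables in each subformula, as in L_{oo omega}. *)
Inductive formula : Type :=
| FEq  : nat -> nat -> formula
| FRel : nat -> nat -> formula
| FNot : formula -> formula
| FConj : forall I : Type, (I -> formula) -> formula
| FEx  : nat -> formula -> formula.

Inductive free (n : nat) : formula -> Prop :=
| free_eq_l : forall b, free n (FEq n b)
| free_eq_r : forall a, free n (FEq a n)
| free_rel_l : forall b, free n (FRel n b)
| free_rel_r : forall a, free n (FRel a n)
| free_not : forall f, free n f -> free n (FNot f)
| free_conj : forall I (g : I -> formula) i, free n (g i) -> free n (FConj I g)
| free_ex : forall m f, n <> m -> free n f -> free n (FEx m f).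

Definition sentence (f : formula) : Prop := forall n, ~ free n f.

Definition update {M : Type} (e : nat -> M) (m : nat) (x : M) : nat -> M :=
  fun k => if Nat.eqb k m then x else e k.

Fixpoint sat {M : Type} (R : M -> M -> Prop) (f : formula) (e : nat -> M)
  : Prop :=
  match f with
  | FEq a b => e a = e b
  | FRel a b => R (e a) (e b)
  | FNot g => ~ sat R g e
  | FConj J g => forall i : J, sat R (g i) e
  | FEx m g => exists x : M, sat R g (update e m x)
  end.

Definition Linf_equiv {X Y : Type} (rho : X -> X -> Prop)
  (sigma : Y -> Y -> Prop) : Prop :=
  forall phi, sentence phi ->
    ((forall e : nat -> X, sat rho phi e) <-> (forall e : nat -> Y, sat sigma phi e)).

(* Both structures are equivalence relations with infinitely many classes, all
   of them infinite.  Between two such relations every partial isomorphism of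
   finite tuples extends by one more point in both directions, so they satisfy
   the same L_{oo omega} sentences.  They are not isomorphic, since sigma has two
   uncountable classes and rho only one.  The identity condenses sigma onto rho.
   To condense rho onto sigma, split the omega_1 countable classes into two
   halves of size omega_1: the class A u B goes onto A, the first half of the
   countable classes onto all countable classes, and the union of the second
   half, which has size omega_1, onto B. *)

From mathcomp Require Import ssreflect ssrfun ssrbool eqtype boolp.
From mathcomp Require Import classical_sets functions cardinality.
From Stdlib Require Import PeanoNat List FinFun.

Set Bullet Behavior "Strict Subproofs".
Local Open Scope classical_set_scope.

Lemma card_le_of_injective {X Y : Type} (f : X -> Y) :
  injective f -> ([set: X] #<= [set: Y])%card.
Proof.
by move=> f_inj; rewrite -(card_le_eql (inj_card_eq (in2W f_inj))); exact: card_leT.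
Qed.

Lemma equinumerous_of_injections {X Y : Type} {f : X -> Y} {g : Y -> X} :
  injective f -> injective g -> equinumerous X Y.
Proof.
move=> /card_le_of_injective XY /card_le_of_injective YX.
have /card_bijP[h [h' hK h'K]] := Cantor_Bernstein XY YX.
have inTK (T : Type) (s : [set: T]) : SigSub (mem_set (I : setT (set_val s))) = s.
  exact: val_inj.
exists (fun x => set_val (h (SigSub (mem_set (I : setT x))))).
exists (fun y => set_val (h' (SigSub (mem_set (I : setT y))))).
by split=> [x|y]; rewrite inTK ?hK ?h'K.
Qed.

Lemma inverse_of_bijective {X Y : Type} {f : X -> Y} :
  injective f -> (forall y, exists x, f x = y) ->
  exists g : Y -> X, (forall x, g (f x) = x) /\ (forall y, f (g y) = y).
Proof.
move=> f_inj /choice[g fgK]; exists g; split=> // x.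
by apply: f_inj; rewrite fgK.
Qed.

Lemma countable_of_injective_into_range {I T : Type} (c : nat -> option T) (h : I -> T) :
  injective h -> (forall i, exists n, c n = Some (h i)) -> countable I.
Proof.
move=> h_inj /choice[idx idxP]; exists idx => i j idx_ij.
by apply: h_inj; apply: Some_inj; rewrite -idxP -idxP idx_ij.
Qed.

Lemma exists_notin_of_uncountable {I T : Type} {h : I -> T} :
  ~ countable I -> injective h -> forall l, exists i, ~ In (h i) l.
Proof.
move=> I_unc h_inj l; apply/existsNP => all_in; apply: I_unc.
apply: (countable_of_injective_into_range (nth_error l) h h_inj) => i.
exact: In_nth_error.
Qed.

Lemma exists_notin_of_nat {T : Type} {h : nat -> T} :
  injective h -> forall l, exists n, ~ In (h n) l.
Proof.
move=> h_inj l; apply/existsNP => all_in.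
suff : incl (map h (seq 0 (S (length l)))) l.
  move/(NoDup_incl_length (Injective_map_NoDup h_inj (seq_NoDup _ 0))).
  by rewrite length_map length_seq; exact: Nat.nle_succ_diag_l.
by move=> _ /in_map_iff[n [<- _]].
Qed.

Definition enumeration {I T : Type} (g : I -> T) (P : T -> Prop) : Prop :=
  [/\ forall i, P (g i), injective g & forall x, P x -> exists i, g i = x].

Lemma enumeration_of_equinumerous {I T : Type} {P : T -> Prop} :
  equinumerous {x | P x} I -> exists g : I -> T, enumeration g P.
Proof.
case=> f [g [fK gK]]; exists (fun i => proj1_sig (g i)); split.
- by move=> i; exact: proj2_sig.
- move=> i j /(eq_sig_hprop (fun x => @Prop_irrelevance (P x))) g_ij.
  by rewrite -(gK i) g_ij gK.
- by move=> x Px; exists (f (exist _ x Px)); rewrite fK.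
Qed.

Lemma enumeration_notin_uncountable {I T : Type} {g : I -> T} {P : T -> Prop} :
  ~ countable I -> enumeration g P -> forall l, exists z, P z /\ ~ In z l.
Proof.
move=> I_unc [Pg g_inj _] l; have [i gi_l] := exists_notin_of_uncountable I_unc g_inj l.
by exists (g i).
Qed.

Lemma enumeration_notin_nat {T : Type} {g : nat -> T} {P : T -> Prop} :
  enumeration g P -> forall l, exists z, P z /\ ~ In z l.
Proof.
move=> [Pg g_inj _] l; have [n gn_l] := exists_notin_of_nat g_inj l.
by exists (g n).
Qed.

Record equiv_inf_classes {X : Type} (R : X -> X -> Prop) : Prop := {
  eqv_refl : forall x, R x x;
  eqv_sym : forall x y, R x y -> R y x;
  eqv_trans : forall x y z, R x y -> R y z -> R x z;
  eqv_fresh_class : forall l, exists y, forall z, In z l -> ~ R y z;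
  eqv_infinite_class : forall y l, exists z, R y z /\ ~ In z l
}.
Arguments eqv_refl {X R}.
Arguments eqv_sym {X R} _ {x y}.
Arguments eqv_trans {X R} _ {x y z}.
Arguments eqv_fresh_class {X R}.
Arguments eqv_infinite_class {X R}.

Definition partial_iso {X Y : Type} (R : X -> X -> Prop) (S : Y -> Y -> Prop)
  (L : list nat) (e : nat -> X) (e' : nat -> Y) : Prop :=
  forall i j, In i L -> In j L ->
    (e i = e j <-> e' i = e' j) /\ (R (e i) (e j) <-> S (e' i) (e' j)).

Lemma partial_iso_sym {X Y : Type} {R : X -> X -> Prop} {S : Y -> Y -> Prop} {L e e'} :
  partial_iso R S L e e' -> partial_iso S R L e' e.
Proof. by move=> iso_ee' i j Li Lj; have [? ?] := iso_ee' i j Li Lj; split; symmetry. Qed.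

Section BackAndForth.

Context {X Y : Type} {R : X -> X -> Prop} {S : Y -> Y -> Prop}.
Hypotheses (R_eqv : equiv_inf_classes R) (S_eqv : equiv_inf_classes S).

Definition matches (L : list nat) (e : nat -> X) (e' : nat -> Y) (x : X) (x' : Y) : Prop :=
  forall l, In l L -> (x = e l <-> x' = e' l) /\ (R x (e l) <-> S x' (e' l)).

(* The three cases: x repeats some [e l], x joins the class of some [e l], or
   x starts a class of its own. *)
Lemma exists_match {L e e'} :
  partial_iso R S L e e' -> forall x, exists x', matches L e e' x x'.
Proof.
move=> iso_ee' x.
have [[i [Li <-]]|x_new] := EM (exists i, In i L /\ e i = x).
  by exists (e' i) => l Ll; apply: iso_ee'.
have [[i [Li Rxi]]|x_unrel] := EM (exists i, In i L /\ R x (e i)).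
{ have [z [Sz z_new]] := eqv_infinite_class S_eqv (e' i) (map e' L).
  exists z => l Ll; have [_ [Ril Sil]] := iso_ee' i l Li Ll; split; split.
  - by move=> xl; case: x_new; exists l.
  - by move=> zl; case: z_new; rewrite zl; apply: in_map.
  - move=> Rxl; apply: (eqv_trans S_eqv (eqv_sym S_eqv Sz)); apply: Ril.
    exact: (eqv_trans R_eqv (eqv_sym R_eqv Rxi) Rxl).
  - move=> Szl; apply: (eqv_trans R_eqv Rxi); apply: Sil.
    exact: (eqv_trans S_eqv Sz Szl). }
have [z z_unrel] := eqv_fresh_class S_eqv (map e' L).
exists z => l Ll.
have not_Rxl : ~ R x (e l) by move=> Rxl; apply: x_unrel; exists l.
have not_Szl : ~ S z (e' l) by apply: z_unrel; apply: in_map.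
split; split.
- by move=> xl; case: not_Rxl; rewrite xl; apply: (eqv_refl R_eqv).
- by move=> zl; case: not_Szl; rewrite zl; apply: (eqv_refl S_eqv).
- by move/not_Rxl.
- by move/not_Szl.
Qed.

Lemma partial_iso_update {L e e'} m x x' :
  partial_iso R S L e e' -> matches L e e' x x' ->
  partial_iso R S (m :: L) (update e m x) (update e' m x').
Proof.
move=> iso_ee' match_xx' i j; rewrite /update.
case: (Nat.eqb_spec i m) => [_|i_m] /=; case: (Nat.eqb_spec j m) => [_|j_m] /=.
- move=> _ _; split; first by [].
  by split=> _; [exact: (eqv_refl S_eqv)|exact: (eqv_refl R_eqv)].
- by move=> _ [/esym/j_m []|/match_xx'].
- move=> [/esym/i_m []|Li] _; have [[xi x'i] [Rx Sx']] := match_xx' i Li.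
  split; split.
  + by move=> /esym/xi/esym.
  + by move=> /esym/x'i/esym.
  + by move=> /(eqv_sym R_eqv)/Rx/(eqv_sym S_eqv).
  + by move=> /(eqv_sym S_eqv)/Sx'/(eqv_sym R_eqv).
- by move=> [/esym/i_m []|Li] [/esym/j_m []|Lj]; apply: iso_ee'.
Qed.

Lemma partial_iso_extend {L e e'} m x :
  partial_iso R S L e e' ->
  exists x', partial_iso R S (m :: L) (update e m x) (update e' m x').
Proof.
move=> iso_ee'; have [x' match_xx'] := exists_match iso_ee' x.
by exists x'; apply: partial_iso_update.
Qed.

End BackAndForth.

Lemma sat_partial_iso {X Y : Type} {R : X -> X -> Prop} {S : Y -> Y -> Prop} :
  equiv_inf_classes R -> equiv_inf_classes S ->
  forall f L e e', (forall n, free n f -> In n L) ->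
  partial_iso R S L e e' -> (sat R f e <-> sat S f e').
Proof.
move=> R_eqv S_eqv; elim=> [a b|a b|g IH|J g IH|m g IH] L e e' freeL iso_ee' /=.
- by case: (iso_ee' a b (freeL _ (free_eq_l a b)) (freeL _ (free_eq_r b a))).
- by case: (iso_ee' a b (freeL _ (free_rel_l a b)) (freeL _ (free_rel_r b a))).
- by rewrite (IH L e e') // => n gn; apply: freeL; constructor.
- split=> sat_g j; apply/(IH j L e e') => // n gn; apply: freeL; econstructor; eauto.
- have freeL' n : free n g -> In n (m :: L).
    case: (Nat.eq_dec n m) => [->|n_m gn]; [by left|right].
    by apply: freeL; constructor.
  split=> [[x sat_x]|[x' sat_x']].
  + have [x' iso'] := partial_iso_extend R_eqv S_eqv m x iso_ee'.
    by exists x'; apply/(IH (m :: L) _ _ freeL' iso').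
  + have [x iso'] := partial_iso_extend S_eqv R_eqv m x' (partial_iso_sym iso_ee').
    by exists x; apply/(IH (m :: L) _ _ freeL' (partial_iso_sym iso')).
Qed.

Lemma Linf_equiv_of_equiv_inf_classes {X Y : Type} (R : X -> X -> Prop) (S : Y -> Y -> Prop) :
  equiv_inf_classes R -> equiv_inf_classes S -> Linf_equiv R S.
Proof.
move=> R_eqv S_eqv phi phi_sentence.
have [x0 _] := eqv_fresh_class R_eqv nil.
have [y0 _] := eqv_fresh_class S_eqv nil.
have sat_iff e e' : sat R phi e <-> sat S phi e'.
  by apply: (sat_partial_iso R_eqv S_eqv phi nil) => // n /phi_sentence.
by split=> sat_all e; [apply/(sat_iff (fun=> x0))|apply/(sat_iff _ (fun=> y0))].
Qed.

Lemma condenses_trans {X Y Z : Type}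
  {R : X -> X -> Prop} {S : Y -> Y -> Prop} {T : Z -> Z -> Prop} :
  condenses R S -> condenses S T -> condenses R T.
Proof.
move=> [F [[F' [FK F'K]] F_hom]] [G [[G' [GK G'K]] G_hom]].
exists (G \o F); split; last by move=> x y /F_hom/G_hom.
by exists (F' \o G'); split=> ? /=; rewrite ?GK ?FK ?G'K ?F'K.
Qed.

Lemma isomorphic_condenses {X Y : Type} {R : X -> X -> Prop} {S : Y -> Y -> Prop} :
  isomorphic R S -> condenses R S.
Proof. by move=> [F [G [FK [GK F_iff]]]]; exists F; split; [exists G|move=> x y /F_iff]. Qed.

Lemma isomorphic_sym {X Y : Type} {R : X -> X -> Prop} {S : Y -> Y -> Prop} :
  isomorphic R S -> isomorphic S R.
Proof.
move=> [F [G [FK [GK F_iff]]]]; exists G, F; do 2!split=> //.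
by move=> y y'; rewrite F_iff !GK.
Qed.

Lemma isomorphic_of_bijective {X Y : Type} {R : X -> X -> Prop} {S : Y -> Y -> Prop} {f : X -> Y} :
  injective f -> (forall y, exists x, f x = y) ->
  (forall x x', R x x' <-> S (f x) (f x')) -> isomorphic R S.
Proof.
move=> f_inj f_surj f_iff; have [g [fK gK]] := inverse_of_bijective f_inj f_surj.
by exists f, g.
Qed.

Definition merged {X I N : Type} (u v : X + I * N) : Prop :=
  match u, v with
  | inl _, inl _ => True
  | inr (a, _), inr (b, _) => a = b
  | _, _ => False
  end.

Definition separated {X Y I N : Type} (u v : (X + Y) + I * N) : Prop :=
  match u, v with
  | inl (inl _), inl (inl _) | inl (inr _), inl (inr _) => True
  | inr (a, _), inr (b, _) => a = b
  | _, _ => False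
  end.

(* The merged block [W + W] is sent onto the first block; of the countable
   classes indexed by [W = W + W], those indexed by the left copy stay classes
   and those indexed by the right copy are packed onto the second block. *)
Lemma merged_condenses_separated {W : Type} :
  equinumerous (W + W) W -> equinumerous (W * nat) W ->
  condenses (@merged (W + W) W nat) (@separated W W W nat).
Proof.
move=> [e [d [eK dK]]] [k [k' [kK k'K]]].
pose tau (u : (W + W) + W * nat) : (W + W) + W * nat :=
  match u with
  | inl s => inl (inl (e s))
  | inr (a, n) => match d a with inl b => inr (b, n) | inr b => inl (inr (k (b, n))) end
  end.
pose tau' (v : (W + W) + W * nat) : (W + W) + W * nat :=
  match v with
  | inl (inl w) => inl (d w)
  | inl (inr w) => let: (b, n) := k' w in inr (e (inr b), n)
  | inr (b, n) => inr (e (inl b), n)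
  end.
exists tau; split.
- exists tau'; split.
  + case=> [s|[a n]] /=; first by rewrite eK.
    by case Eda: (d a) => [b|b] /=; rewrite ?kK -Eda dK.
  + case=> [[w|w]|[b n]] /=; first by rewrite dK.
    * by case Ek: (k' w) => [b n] /=; rewrite eK -Ek k'K.
    * by rewrite eK.
- case=> [s|[a n]] [t|[b m]] //= <-.
  by case: (d a).
Qed.

Section Partition.

Context {W : Type} {A B : W -> Prop} {C : W -> W -> Prop}.
Hypotheses (W_uncountable : ~ countable W)
  (Hcover : forall x, A x \/ B x \/ exists a, C a x)
  (HAB : forall {x}, A x -> B x -> False)
  (HAC : forall {x a}, A x -> C a x -> False)
  (HBC : forall {x a}, B x -> C a x -> False)
  (HCC : forall {x a b}, C a x -> C b x -> a = b).
Context {gA gB : W -> W} {c : W -> nat -> W}.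
Hypotheses (gA_enum : enumeration gA A) (gB_enum : enumeration gB B)
  (c_enum : forall a, enumeration (c a) (C a)).

Definition rho (x y : W) : Prop :=
  ((A x \/ B x) /\ (A y \/ B y)) \/ (exists a, C a x /\ C a y).

Definition sigma (x y : W) : Prop :=
  (A x /\ A y) \/ (B x /\ B y) \/ (exists a, C a x /\ C a y).

Lemma sigma_sub_rho {x y} : sigma x y -> rho x y.
Proof. by case=> [[Ax Ay]|[[Bx By]|C_xy]]; [left; split; left|left; split; right|right]. Qed.

Lemma C_rho {a x y} : C a x -> rho x y -> C a y.
Proof.
move=> Cax [[[Ax|Bx] _]|[b [Cbx Cby]]].
- by case: (HAC Ax Cax).
- by case: (HBC Bx Cax).
- by rewrite (HCC Cax Cbx).
Qed.

Lemma fresh_C_class l : exists a, forall z, In z l -> ~ C a z.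
Proof.
apply: contrapT => /forallNP all_hit; apply: W_uncountable.
have /choice[f fP] : forall a, exists z, In z l /\ C a z.
  by move=> a; have /existsNP[z /not_implyP[zl /contrapT Caz]] := all_hit a; exists z.
apply: (countable_of_injective_into_range (nth_error l) f).
  by move=> a b fab; apply: (HCC (proj2 (fP a))); rewrite fab; exact: (proj2 (fP b)).
by move=> a; apply: In_nth_error; exact: (proj1 (fP a)).
Qed.

Lemma fresh_point l : exists y, forall z, In z l -> ~ rho y z.
Proof.
have [a a_fresh] := fresh_C_class l; have [Cc _ _] := c_enum a.
by exists (c a 0) => z zl /(C_rho (Cc 0)); apply: a_fresh.
Qed.

Lemma rho_equiv_inf_classes : equiv_inf_classes rho.
Proof.
split.
- move=> x; case: (Hcover x) => [Ax|[Bx|[a Cax]]].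
  + by left; split; left.
  + by left; split; right.
  + by right; exists a.
- by move=> x y [[ABx ABy]|[a [Cax Cay]]]; [left|right; exists a].
- move=> x y z [[ABx ABy]|[a [Cax Cay]]] rho_yz.
  + case: rho_yz => [[_ ABz]|[b [Cby _]]]; first by left.
    by case: ABy => [Ay|By]; [case: (HAC Ay Cby)|case: (HBC By Cby)].
  + by right; exists a; split; last exact: C_rho Cay rho_yz.
- exact: fresh_point.
- move=> y l; have [z [Az zl]] := enumeration_notin_uncountable W_uncountable gA_enum l.
  case: (Hcover y) => [Ay|[By|[a Cay]]].
  + by exists z; split=> //; left; split; left.
  + by exists z; split=> //; left; split; [right|left].
  + have [z' [Caz' z'l]] := enumeration_notin_nat (c_enum a) l.
    by exists z'; split=> //; right; exists a.
Qed.

Lemma sigma_equiv_inf_classes : equiv_inf_classes sigma.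
Proof.
split.
- move=> x; case: (Hcover x) => [Ax|[Bx|[a Cax]]].
  + by left.
  + by right; left.
  + by right; right; exists a.
- by move=> x y [[Ax Ay]|[[Bx By]|[a [Cax Cay]]]]; [left|right; left|right; right; exists a].
- move=> x y z [[Ax Ay]|[[Bx By]|[a [Cax Cay]]]] [[Ay' Az]|[[By' Bz]|[b [Cby Cbz]]]].
  + by left.
  + by case: (HAB Ay By').
  + by case: (HAC Ay Cby).
  + by case: (HAB Ay' By).
  + by right; left.
  + by case: (HBC By Cby).
  + by case: (HAC Ay' Cay).
  + by case: (HBC By' Cay).
  + by right; right; exists a; split; last rewrite (HCC Cay Cby).
- move=> l; have [y y_fresh] := fresh_point l.
  by exists y => z zl /sigma_sub_rho; apply: y_fresh.
- move=> y l; case: (Hcover y) => [Ay|[By|[a Cay]]].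
  + have [z [Az zl]] := enumeration_notin_uncountable W_uncountable gA_enum l.
    by exists z; split=> //; left.
  + have [z [Bz zl]] := enumeration_notin_uncountable W_uncountable gB_enum l.
    by exists z; split=> //; right; left.
  + have [z [Caz zl]] := enumeration_notin_nat (c_enum a) l.
    by exists z; split=> //; right; right; exists a.
Qed.

Definition coord (u : (W + W) + W * nat) : W :=
  match u with
  | inl (inl w) => gA w
  | inl (inr w) => gB w
  | inr (a, n) => c a n
  end.

Lemma coord_injective : injective coord.
Proof.
have [Ag gA_inj _] := gA_enum; have [Bg gB_inj _] := gB_enum.
have Cc a n : C a (c a n) by case: (c_enum a).
case=> [[w|w]|[a n]] [[v|v]|[b m]] /= eq_uv.
- by rewrite (gA_inj _ _ eq_uv).
- by move: (Bg v); rewrite -eq_uv => /(HAB (Ag w)).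
- by move: (Cc b m); rewrite -eq_uv => /(HAC (Ag w)).
- by move: (Bg w); rewrite eq_uv => /(HAB (Ag v)).
- by rewrite (gB_inj _ _ eq_uv).
- by move: (Cc b m); rewrite -eq_uv => /(HBC (Bg w)).
- by move: (Cc a n); rewrite eq_uv => /(HAC (Ag v)).
- by move: (Cc a n); rewrite eq_uv => /(HBC (Bg v)).
- move: (Cc b m); rewrite -eq_uv => /(HCC (Cc a n)) ab; subst b.
  by have [_ ca_inj _] := c_enum a; rewrite (ca_inj _ _ eq_uv).
Qed.

Lemma coord_surjective x : exists u, coord u = x.
Proof.
case: (Hcover x) => [Ax|[Bx|[a Cax]]].
- by have [_ _ /(_ x Ax) [w <-]] := gA_enum; exists (inl (inl w)).
- by have [_ _ /(_ x Bx) [w <-]] := gB_enum; exists (inl (inr w)).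
- by have [_ _ /(_ x Cax) [n <-]] := c_enum a; exists (inr (a, n)).
Qed.

Lemma not_rho_AB_C {x y b} : A x \/ B x -> C b y -> ~ rho x y.
Proof.
move=> ABx Cby /(eqv_sym rho_equiv_inf_classes)/(C_rho Cby).
by case: ABx => [Ax|Bx]; [apply: HAC Ax|apply: HBC Bx].
Qed.

Lemma rho_C_C {x y a b} : C a x -> C b y -> rho x y <-> a = b.
Proof.
move=> Cax Cby; split=> [/(C_rho Cax) Cay|ab]; first exact: HCC Cay Cby.
by right; exists a; split; last rewrite ab.
Qed.

Lemma not_sigma_A_B {x y} : A x -> B y -> ~ sigma x y.
Proof.
move=> Ax By [[_ Ay]|[[Bx _]|[a [Cax _]]]].
- exact: HAB Ay By.
- exact: HAB Ax Bx.
- exact: HAC Ax Cax.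
Qed.

Lemma rho_coord u v : rho (coord u) (coord v) <-> merged u v.
Proof.
have [Ag _ _] := gA_enum; have [Bg _ _] := gB_enum.
have AB s : A (coord (inl s)) \/ B (coord (inl s)) by case: s => w /=; [left|right].
have Cc a n : C a (coord (inr (a, n))) by have [Cc _ _] := c_enum a; apply: Cc.
case: u => [s|[a n]]; case: v => [t|[b m]]; split=> //=.
- by move=> _; left; split; [apply: AB s|apply: AB t].
- exact: not_rho_AB_C (AB s) (Cc b m).
- by move/(eqv_sym rho_equiv_inf_classes); apply: not_rho_AB_C (AB t) (Cc a n).
- by move/(rho_C_C (Cc a n) (Cc b m)).
- by move/(rho_C_C (Cc a n) (Cc b m)).
Qed.

Lemma sigma_coord u v : sigma (coord u) (coord v) <-> separated u v.
Proof.
have [Ag _ _] := gA_enum; have [Bg _ _] := gB_enum.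
have AB s : A (coord (inl s)) \/ B (coord (inl s)) by case: s => w /=; [left|right].
have Cc a n : C a (coord (inr (a, n))) by have [Cc _ _] := c_enum a; apply: Cc.
have not_sigma_AB_C s b m : ~ sigma (coord (inl s)) (coord (inr (b, m))).
  by move/sigma_sub_rho; apply: not_rho_AB_C (AB s) (Cc b m).
case: u => [[w|w]|[a n]]; case: v => [[v|v]|[b m]]; split=> //=.
- by move=> _; left.
- exact: not_sigma_A_B (Ag w) (Bg v).
- exact: not_sigma_AB_C (inl w) b m.
- by move/(eqv_sym sigma_equiv_inf_classes); apply: not_sigma_A_B (Ag v) (Bg w).
- by move=> _; right; left.
- exact: not_sigma_AB_C (inr w) b m.
- by move/(eqv_sym sigma_equiv_inf_classes); apply: not_sigma_AB_C (inl v) a n.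
- by move/(eqv_sym sigma_equiv_inf_classes); apply: not_sigma_AB_C (inr v) a n.
- by move/sigma_sub_rho/(rho_C_C (Cc a n) (Cc b m)).
- by move=> ab; right; right; exists a; split; [apply: Cc|rewrite ab; apply: Cc].
Qed.

Lemma rho_condenses_sigma : condenses rho sigma.
Proof.
have coord_inl_inj : injective (fun s => coord (inl s)) by move=> s t /coord_injective [].
have coord_inr_inj : injective (fun p => coord (inr p)) by move=> p q /coord_injective [].
have sum_W := equinumerous_of_injections coord_inl_inj (@inl_inj W W).
have prod_W :=
  equinumerous_of_injections coord_inr_inj (fun a b (e : (a, 0) = (b, 0)) => f_equal fst e).
have merged_rho : isomorphic (@merged (W + W) W nat) rho.
  apply: isomorphic_of_bijective coord_injective coord_surjective _.
  by move=> u v; rewrite rho_coord.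
have separated_sigma : isomorphic (@separated W W W nat) sigma.
  apply: isomorphic_of_bijective coord_injective coord_surjective _.
  by move=> u v; rewrite sigma_coord.
apply: condenses_trans (isomorphic_condenses (isomorphic_sym merged_rho)) _.
apply: condenses_trans (merged_condenses_separated sum_W prod_W) _.
exact: isomorphic_condenses separated_sigma.
Qed.

Lemma sigma_condenses_rho : condenses sigma rho.
Proof. by exists id; split; [exists id|move=> x y /sigma_sub_rho]. Qed.

Lemma rho_uncountable_class {y} (h : W -> W) :
  injective h -> (forall w, rho y (h w)) -> A y \/ B y.
Proof.
move=> h_inj rho_yh; case: (Hcover y) => [Ay|[By|[a Cay]]]; [by left|by right|].
case: W_uncountable.
apply: (countable_of_injective_into_range (fun n => Some (c a n)) h h_inj) => w.
by have [_ _ /(_ _ (C_rho Cay (rho_yh w))) [n <-]] := c_enum a; exists n.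
Qed.

Lemma not_isomorphic_rho_sigma : ~ isomorphic rho sigma.
Proof.
move=> /isomorphic_sym [G [F [GK [FK G_iff]]]].
have G_inj : injective G by move=> y y' /(f_equal F); rewrite !GK.
have [Ag gA_inj _] := gA_enum; have [Bg gB_inj _] := gB_enum.
have [a1 [Aa1 _]] := enumeration_notin_uncountable W_uncountable gA_enum nil.
have [b1 [Bb1 _]] := enumeration_notin_uncountable W_uncountable gB_enum nil.
have ABa1 : A (G a1) \/ B (G a1).
  apply: (rho_uncountable_class (G \o gA)) => [w w' /G_inj/gA_inj //|w].
  by apply/G_iff; left.
have ABb1 : A (G b1) \/ B (G b1).
  apply: (rho_uncountable_class (G \o gB)) => [w w' /G_inj/gB_inj //|w].
  by apply/G_iff; right; left.
have /G_iff : rho (G a1) (G b1) by left.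
exact: not_sigma_A_B Aa1 Bb1.
Qed.

End Partition.

Theorem mainTheorem11
  (W : Set) (lt : W -> W -> Prop) (HW : is_omega1 W lt)
  (A B : W -> Prop) (C : W -> W -> Prop)
  (Hcover : forall x, A x \/ B x \/ exists a, C a x)
  (HAB : forall x, A x -> B x -> False)
  (HAC : forall x a, A x -> C a x -> False)
  (HBC : forall x a, B x -> C a x -> False)
  (HCC : forall x a b, C a x -> C b x -> a = b)
  (HA : equinumerous {x : W | A x} W)
  (HB : equinumerous {x : W | B x} W)
  (HC : forall a, equinumerous {x : W | C a x} nat) :
  let rho := fun x y : W =>
    ((A x \/ B x) /\ (A y \/ B y)) \/ (exists a, C a x /\ C a y) in
  let sigma := fun x y : W =>
    (A x /\ A y) \/ (B x /\ B y) \/ (exists a, C a x /\ C a y) in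
  bi_condensable rho sigma /\ Linf_equiv rho sigma /\ ~ isomorphic rho sigma.
Proof.
move=> rho sigma.
have W_uncountable := o1_uncountable _ _ HW.
have [gA gA_enum] := enumeration_of_equinumerous HA.
have [gB gB_enum] := enumeration_of_equinumerous HB.
have [c c_enum] := choice (fun a => enumeration_of_equinumerous (HC a)).
split; [split|split].
- by apply: rho_condenses_sigma; eassumption.
- exact: sigma_condenses_rho.
- apply: Linf_equiv_of_equiv_inf_classes.
  + by apply: rho_equiv_inf_classes; eassumption.
  + by apply: sigma_equiv_inf_classes; eassumption.
- by apply: not_isomorphic_rho_sigma; eassumption.
Qed.
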